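(* In the setting described in the context, the matrices $\boldsymbol{\Psi}\in\mathbb{C}^{(2D-2)\times(2D-2)}$ and $\mathbf{F}\in\mathbb{C}^{(M^2-M)\times(M^2-M)}$ are non-singular, and $\overline{\mathbf{J}}\in\{0,1\}^{(M^2-M)\times(2D-2)}$ has full column rank.
   Context: Let $\{m_1,\dots,m_M\}$ be $M$ distinct integers, $\mathbb{D}=\{|m_p-m_q|:1\le p,q\le M\}=\{\ell_0,\dots,\ell_{D-1}\}$ with $0=\ell_0<\ell_1<\dots<\ell_{D-1}$. For $0\le n\le D-1$ let $\mathbf{L}_n\in\{0,1\}^{M\times M}$ with $[\mathbf{L}_n]_{p,q}=1$ if $m_p-m_q=\ell_n$ and $0$ otherwise. Let $\mathbf{J}=[\mathrm{vec}(\mathbf{L}_{D-1}^T),\dots,\mathrm{vec}(\mathbf{L}_1^T),\mathrm{vec}(\mathbf{L}_0),\mathrm{vec}(\mathbf{L}_1),\dots,\mathrm{vec}(\mathbf{L}_{D-1})]\in\{0,1\}^{M^2\times(2D-1)}$ ($\mathrm{vec}$ stacks columns). The indices $(i-1)M+i$, $1\le i\le M$, are the positions of the diagonal entries in $\mathrm{vec}$ of an $M\times M$ matrix. $\overline{\mathbf{J}}$ is obtained from $\mathbf{J}$ by removing its $D$-th column and its rows with indices $(i-1)M+i$, $1\le i\le M$. $\boldsymbol{\Psi}=\begin{bmatrix}\mathbf{I}_{D-1}&-j\mathbf{I}_{D-1}\\ \mathbf{I}_{D-1}&j\mathbf{I}_{D-1}\end{bmatrix}$. Let $\overline{\mathbf{e}}_p\in\mathbb{R}^M$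 be the $p$-th standard basis vector. For $1\le p<q\le M$ set $s(p,q)=(p-1)M+q-\frac{p(p+1)}{2}\in\{1,\dots,\frac{M^2-M}{2}\}$. Define $\ddot{\mathbf{F}},\widetilde{\mathbf{F}}\in\{0,\pm1\}^{\frac{M^2-M}{2}\times(M^2-M)}$ by: row $s(p,q)$ of $\ddot{\mathbf{F}}$ (resp. $\widetilde{\mathbf{F}}$) is obtained from the row vector $\overline{\mathbf{e}}_p^T\otimes\overline{\mathbf{e}}_q^T+\overline{\mathbf{e}}_q^T\otimes\overline{\mathbf{e}}_p^T$ (resp. $\overline{\mathbf{e}}_p^T\otimes\overline{\mathbf{e}}_q^T-\overline{\mathbf{e}}_q^T\otimes\overline{\mathbf{e}}_p^T$) by removing its entries with indices $(i-1)M+i$, $1\le i\le M$. Finally $\mathbf{F}=\frac12\begin{bmatrix}\ddot{\mathbf{F}}\\ j\widetilde{\mathbf{F}}\end{bmatrix}$. *)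

From HB Require Import structures.
From mathcomp Require Import all_boot all_order all_algebra.
From mathcomp Require Import algC.
Set Implicit Arguments. Unset Strict Implicit. Unset Printing Implicit Defensive.
Import Order.TTheory GRing.Theory Num.Theory.
Local Open Scope ring_scope.

Section Defs.
Variables (M : nat) (m : 'I_M -> int).

(* m extended to nat indices (0-based), value 0 outside [0,M) *)
Definition mn (i : nat) : int := if insub i is Some p then m p else 0.

(* the sorted list 0 = ell_0 < ... < ell_{D-1} of distinct |m_p - m_q| *)
Definition ells : seq nat :=
  sort leq (undup [seq `|m p - m q|%N | p <- enum 'I_M, q <- enum 'I_M]).
Definition Dnum : nat := size ells.
Definition ell (n : nat) : nat := nth 0%N ells n.

Definition Lf (n i j : nat) : algC := (mn i - mn j == (ell n)%:Z)%:R.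
Definition Lmx (n : nat) : 'M[algC]_M := \matrix_(i, j) Lf n i j.

(* vec (column stacking), 0-based: entry k of vec(A) is A (k %% M) (k %/ M) *)
Definition vecf (f : nat -> nat -> algC) (k : nat) : algC := f (k %% M)%N (k %/ M)%N.

Definition Jcol (c : nat) : nat -> algC :=
  if (c < Dnum.-1)%N then vecf (fun i j => Lf (Dnum.-1 - c) j i)
  else vecf (Lf (c - Dnum.-1)).

Definition Jmx : 'M[algC]_(M * M, (2 * Dnum).-1) := \matrix_(k, c) Jcol c k.

Definition offd : seq nat := [seq k <- iota 0 (M * M) | (k %% M != k %/ M)%N].

(* Jbar: J with its D-th column (0-based index D-1) and diagonal rows removed *)
Definition Jbar : 'M[algC]_(M * M - M, 2 * Dnum - 2) :=
  \matrix_(r, c) Jcol (if (c < Dnum.-1)%N then (c : nat) else (c : nat).+1) (nth 0%N offd r).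

End Defs.

Definition Psi (D : nat) : 'M[algC]_(D.-1 + D.-1) :=
  block_mx 1%:M (- 'i) %:M 1%:M 'i%:M.

Definition hF (M : nat) : nat := ((M * M - M) %/ 2)%N.

Lemma hF_double M : (hF M + hF M = M * M - M)%N.
Proof.
rewrite /hF -{3}(odd_double_half (M * M - M)) divn2 addnn.
suff -> : odd (M * M - M) = false by [].
have -> : (M * M - M = M * (M - 1))%N by rewrite mulnBr muln1.
case: M => [|n] //=.
by rewrite subn1 /= oddM /=; case: (odd n).
Qed.

(* s(p,q) with 1-based p = p0+1, q = q0+1 *)
Definition sidx (M p0 q0 : nat) : nat :=
  let p := p0.+1 in let q := q0.+1 in (p.-1 * M + q - (p * p.+1) %/ 2)%N.

(* entry k (0-based) of e_p^T (x) e_q^T + sg * e_q^T (x) e_p^T, p q 0-based *)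
Definition kronf (M : nat) (sg : algC) (p q k : nat) : algC :=
  (((k %/ M)%N == p) && ((k %% M)%N == q))%:R + sg * (((k %/ M)%N == q) && ((k %% M)%N == p))%:R.

(* row s(p,q) of the matrix is the (diagonal-removed) kron vector, for p<q *)
Definition Fpart (M : nat) (sg : algC) : 'M[algC]_(hF M, M * M - M) :=
  \matrix_(r, c) \sum_(p < M) \sum_(q < M | (p < q)%N && (sidx M p q == r.+1)%N)
      kronf M sg p q (nth 0%N (offd M) c).

Definition Fdd M := Fpart M 1.
Definition Ftilde M := Fpart M (-1).

Definition Fmx (M : nat) : 'M[algC]_(M * M - M) :=
  castmx (hF_double M, erefl) (2^-1 *: col_mx (Fdd M) ('i *: Ftilde M)).

(* Psi times 2^-1 [I, I; 'i I, -'i I] is the identity.  For p < q, row s(p,q)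
   of Fdd is e_pq + e_qp and the same row of Ftilde is e_pq - e_qp, so
   their half sum and half difference put every unit row vector in the row
   space of F.  Column c of Jbar is the indicator of the off-diagonal pairs
   (i, j) with m_i - m_j = d_c, where the lags d_c = -ell_(D-1), ..., -ell_1,
   ell_1, ..., ell_(D-1) are pairwise distinct and nonzero; a pair realizing
   d_c therefore indexes a row of Jbar equal to the unit vector e_c, and these
   rows form an identity submatrix. *)

From HB Require Import structures.
From mathcomp Require Import all_boot all_order all_algebra.
From mathcomp Require Import algC.
From mathcomp Require Import zify.
Set Implicit Arguments. Unset Strict Implicit. Unset Printing Implicit Defensive.
Import Order.TTheory GRing.Theory Num.Theory.
Local Open Scope ring_scope.

Lemma Psi_unit D : Psi D \in unitmx.
Proof.
pose Q : 'M[algC]_(D.-1 + D.-1) := block_mx 1%:M 1%:M 'i%:M (- 'i)%:M.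
have /mulmx1_unit[] // : Psi D *m (2^-1 *: Q) = 1%:M.
rewrite -scalemxAr /Psi /Q mulmx_block !mul_scalar_mx !scale_scalar_mx.
rewrite -!(raddfD (@scalar_mx algC _)) /= !mul1r !mulrN !mulNr -expr2 sqrCi.
rewrite opprK !subrr raddf0 -scalar_mx_block scale_scalar_mx mulVf //.
by rewrite pnatr_eq0.
Qed.

Section RowSpace.
Variables (F : fieldType) (m n : nat).
Implicit Types (A S : 'M[F]_(m, n)) (u v : 'rV[F]_n).

Lemma row_full_deltas A : (forall j, ('e_j : 'rV_n) <= A)%MS -> row_full A.
Proof. by move=> sA; rewrite -sub1mx; apply/row_subP => j; rewrite row1. Qed.

Lemma sum_diff_submx S u v : 2%:R != 0 :> F ->
  ((u + v)%R <= S)%MS -> ((u - v)%R <= S)%MS -> (u <= S)%MS /\ (v <= S)%MS.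
Proof.
move=> n2 sDS sBS; have halfE (w : 'rV[F]_n) : w = 2^-1 *: (w *+ 2).
  by rewrite -scaler_nat scalerA mulVf ?scale1r.
split; [rewrite [u]halfE | rewrite [v]halfE]; apply: scalemx_sub.
  have -> : u *+ 2 = (u + v) + (u - v) by rewrite addrACA subrr addr0 mulr2n.
  by rewrite addmx_sub.
have -> : v *+ 2 = (u + v) - (u - v).
  by rewrite opprB [u + v]addrC addrACA subrr addr0 mulr2n.
by rewrite addmx_sub ?eqmx_opp.
Qed.

End RowSpace.

Lemma divn_modn_pair M i j : (i < M)%N ->
  ((j * M + i) %/ M = j)%N /\ ((j * M + i) %% M = i)%N.
Proof.
move=> iM; have M0 : (0 < M)%N by apply: leq_ltn_trans iM.
by rewrite divnMDl // divn_small // addn0 modnMDl modn_small.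
Qed.

Lemma eq_divn_modn_pair M k i j : (i < M)%N ->
  ((k %/ M == j) && (k %% M == i))%N = (k == j * M + i)%N.
Proof.
move=> iM; apply/idP/eqP => [/andP[/eqP <- /eqP <-] | ->]; first exact: divn_eq.
by have [-> ->] := divn_modn_pair j iM; rewrite !eqxx.
Qed.

Local Notation off M c := (nth 0%N (offd M) c).

Section OffDiagonal.
Variable M : nat.
Lemma count_diag j : (j <= M)%N ->
  count (fun k => k %% M == k %/ M)%N (iota 0 (j * M)) = j.
Proof.
elim: j => [|j IH] jM; first by rewrite mul0n.
rewrite mulSnr iotaD count_cat IH ?(ltnW jM) // add0n.
rewrite -[X in iota X]addn0 iotaDl count_map.
rewrite (@eq_in_count _ _ (pred1 j)) => [|i]; last first.
  by rewrite mem_iota add0n => /andP[_ iM] /=; have [-> ->] := divn_modn_pair j iM.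
by rewrite count_uniq_mem ?iota_uniq // mem_iota add0n jM addn1.
Qed.

Lemma size_offd : size (offd M) = (M * M - M)%N.
Proof.
rewrite /offd size_filter.
have := count_predC (fun k => k %% M == k %/ M)%N (iota 0 (M * M)).
by rewrite count_diag // size_iota => E; rewrite -[in RHS]E addKn.
Qed.

Lemma mem_offd k : (k \in offd M) = (k < M * M)%N && (k %% M != k %/ M)%N.
Proof. by rewrite mem_filter mem_iota add0n andbC. Qed.

Lemma pair_in_offd i j : (i < M)%N -> (j < M)%N -> i != j -> (j * M + i)%N \in offd M.
Proof.
move=> iM jM ij; rewrite mem_offd.
have [-> ->] := divn_modn_pair j iM; rewrite ij andbT; nia.
Qed.

Lemma off_eq (c c' : 'I_(M * M - M)) : (off M c == off M c') = (c == c').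
Proof. by rewrite nth_uniq ?size_offd ?filter_uniq ?iota_uniq. Qed.

Lemma offd_index k : k \in offd M -> exists c : 'I_(M * M - M), off M c = k.
Proof.
move=> kin; have lt : (index k (offd M) < M * M - M)%N by rewrite -size_offd index_mem.
by exists (Ordinal lt); rewrite nth_index.
Qed.

Lemma off_pair (c : 'I_(M * M - M)) :
  exists i j, [/\ (i < M)%N, (j < M)%N, i != j & off M c = (j * M + i)%N].
Proof.
have : off M c \in offd M by rewrite mem_nth ?size_offd.
rewrite mem_offd => /andP[kM ne].
have M0 : (0 < M)%N by have := ltn_ord c; nia.
exists (off M c %% M)%N, (off M c %/ M)%N.
by rewrite ltn_mod ltn_divLR // -divn_eq.
Qed.

End OffDiagonal.

Lemma triangle_halfK p : ((p.+1 * p.+2) %/ 2 * 2 = p.+1 * p.+2)%N.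
Proof. by rewrite divnK // dvdn2 oddM /=; case: odd. Qed.

Section RowIndex.
Variable M : nat.

Lemma sidxE p q : (p < q < M)%N ->
  (sidx M p q * 2 + p.+1 * p.+2 = (p * M + q.+1) * 2)%N.
Proof. by case/andP=> pq qM; rewrite /sidx /= -[(p.+1 * p.+2)%N]triangle_halfK; nia. Qed.

Lemma sidx_gt0 p q : (p < q < M)%N -> (0 < sidx M p q)%N.
Proof. by move=> h; have := sidxE h; case/andP: h; nia. Qed.

Lemma sidx_le p q : (p < q < M)%N -> (sidx M p q <= hF M)%N.
Proof. by move=> h; have := sidxE h; have := hF_double M; case/andP: h; nia. Qed.

Lemma sidx_ltl p q p' q' : (p < q < M)%N -> (p' < q' < M)%N -> (p < p')%N ->
  (sidx M p q < sidx M p' q')%N.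
Proof.
by move=> h h' pp'; have := sidxE h; have := sidxE h'; case/andP: h; case/andP: h'; nia.
Qed.

Lemma sidx_inj p q p' q' : (p < q < M)%N -> (p' < q' < M)%N ->
  sidx M p q = sidx M p' q' -> p = p' /\ q = q'.
Proof.
move=> h h' E; have [lt|gt|pp'] := ltngtP p p'.
- by have := sidx_ltl h h' lt; rewrite E ltnn.
- by have := sidx_ltl h' h gt; rewrite E ltnn.
by subst p'; split => //; have := sidxE h; have := sidxE h'; rewrite E; nia.
Qed.

Lemma Fpart_row_pair p q (x y : 'I_(M * M - M)) : (p < q < M)%N ->
  off M x = (p * M + q)%N -> off M y = (q * M + p)%N ->
  exists r, forall sg, row r (Fpart M sg) = 'e_x + sg *: 'e_y.
Proof.
move=> h ex ey; have [r rE] : exists r : 'I_(hF M), r.+1 = sidx M p q.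
  have r_lt : ((sidx M p q).-1 < hF M)%N.
    by have := sidx_gt0 h; have := sidx_le h; lia.
  by exists (Ordinal r_lt); rewrite prednK ?sidx_gt0.
have /andP[pq qM] := h; have pM : (p < M)%N := ltn_trans pq qM.
exists r => sg; apply/rowP => c; rewrite !mxE pair_big_dep /=.
rewrite (big_pred1 (Ordinal pM, Ordinal qM)) => [|[p' q']] /=.
  by rewrite /kronf !eq_divn_modn_pair // -ex -ey !off_eq.
rewrite rE xpair_eqE -!val_eqE /=.
apply/andP/andP => [[pq' /eqP E] | [/eqP-> /eqP->]]; last by rewrite pq.
by have [-> ->] := sidx_inj (introT andP (conj pq' (ltn_ord q'))) h E.
Qed.

Lemma Fmx_unit : Fmx M \in unitmx.
Proof.
rewrite -row_full_unit -sub1mx /Fmx (eqmx_cast _ _) (eqmx_scale _ _); last first.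
  by rewrite invr_eq0 pnatr_eq0.
rewrite -addsmxE sub1mx; set S := (Fdd M + 'i *: Ftilde M)%MS.
have sFdd : (Fdd M <= S)%MS := addsmxSl _ _.
have sFtilde : (Ftilde M <= S)%MS.
  by apply: submx_trans (addsmxSr _ _); rewrite (eqmx_scale _ _) ?neq0Ci.
have deltas_sub p q (x y : 'I_(M * M - M)) : (p < q < M)%N ->
    off M x = (p * M + q)%N -> off M y = (q * M + p)%N ->
    (('e_x : 'rV_(M * M - M)) <= S)%MS /\ (('e_y : 'rV_(M * M - M)) <= S)%MS.
  move=> h ex ey; have [r rowE] := Fpart_row_pair h ex ey.
  apply: sum_diff_submx; first by rewrite pnatr_eq0.
    by rewrite -['e_y]scale1r -rowE (submx_trans (row_sub r _) sFdd).
  by rewrite -scaleN1r -rowE (submx_trans (row_sub r _) sFtilde).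
apply: row_full_deltas => c; have [i [j [iM jM ij ec]]] := off_pair c.
have [y ey] := offd_index (pair_in_offd jM iM (contra_neq esym ij)).
have [lt|gt|eq_ij] := ltngtP i j; last by rewrite eq_ij eqxx in ij.
  by have [] := deltas_sub i j y c (introT andP (conj lt jM)) ey ec.
by have [] := deltas_sub j i c y (introT andP (conj gt iM)) ec ey.
Qed.

End RowIndex.

Section Lags.
Variables (M : nat) (m : 'I_M -> int).
Local Notation D := (Dnum m).

Lemma mnE (i : 'I_M) : mn m i = m i.
Proof. by rewrite /mn valK. Qed.
Lemma ells_ltn_sorted : sorted ltn (ells m).
Proof.
by rewrite ltn_sorted_uniq_leq sort_uniq undup_uniq sort_sorted //; exact: leq_total.
Qed.

Lemma ell_ltn n n' : (n < n' < D)%N -> (ell m n < ell m n')%N.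
Proof.
case/andP=> nn' n'D; apply: (sorted_ltn_nth ltn_trans 0%N ells_ltn_sorted) => //.
by rewrite inE (ltn_trans nn').
Qed.

Lemma ell_gt0 n : (0 < n < D)%N -> (0 < ell m n)%N.
Proof. by move/ell_ltn; apply: leq_ltn_trans. Qed.

Lemma ell_inj n n' : ell m n = ell m n' -> (n < D)%N -> (n' < D)%N -> n = n'.
Proof.
move=> E nD n'D; have [lt|gt|//] := ltngtP n n'.
- by have := ell_ltn (introT andP (conj lt n'D)); rewrite E ltnn.
- by have := ell_ltn (introT andP (conj gt nD)); rewrite E ltnn.
Qed.

Lemma ell_diff n : (n < D)%N -> exists p q : 'I_M, m p - m q = (ell m n)%:Z.
Proof.
move=> nD; have : ell m n \in ells m by apply: mem_nth.
rewrite mem_sort mem_undup => /allpairsP[[p q] [_ _ /= ->]].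
have [pos|neg] := lerP 0 (m p - m q).
  by exists p, q; rewrite gez0_abs.
by exists q, p; rewrite ltz0_abs // opprB.
Qed.

(* The columns c < D - 1 of Jbar come from vec(L_n^T), which records the
   difference -ell_n rather than ell_n. *)
Definition lag (c : nat) : int :=
  if (c < D.-1)%N then - (ell m (D.-1 - c))%:Z else (ell m (c.+1 - D.-1))%:Z.

Lemma lag_neq0 (c : 'I_(2 * D - 2)) : lag c != 0.
Proof.
have := ltn_ord c; rewrite /lag; case: ifP => hc cD.
  by rewrite oppr_eq0 eqz_nat -lt0n ell_gt0 //; lia.
by rewrite eqz_nat -lt0n ell_gt0 //; lia.
Qed.

Lemma eq_lag (c c' : 'I_(2 * D - 2)) : (lag c == lag c') = (c == c').
Proof.
apply/eqP/eqP => [|-> //]; have := ltn_ord c; have := ltn_ord c'.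
rewrite /lag; case: ifP => hc; case: ifP => hc' c'D cD E; apply: ord_inj.
- by move/oppr_inj/eqP: E; rewrite eqz_nat => /eqP /ell_inj; lia.
- by have := @ell_gt0 (c'.+1 - D.-1); have := @ell_gt0 (D.-1 - c); lia.
- by have := @ell_gt0 (c.+1 - D.-1); have := @ell_gt0 (D.-1 - c'); lia.
- by move/eqP: E; rewrite eqz_nat => /eqP /ell_inj; lia.
Qed.

Lemma lag_diff (c : 'I_(2 * D - 2)) : exists p q : 'I_M, m p - m q = lag c.
Proof.
have := ltn_ord c; rewrite /lag; case: ifP => hc cD.
  have [p [q E]] := @ell_diff (D.-1 - c) ltac:(lia).
  by exists q, p; rewrite -E opprB.
by apply: ell_diff; lia.
Qed.

Lemma Jbar_lagE r (c : 'I_(2 * D - 2)) :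
  Jbar m r c = (mn m (off M r %% M) - mn m (off M r %/ M) == lag c)%:R.
Proof.
rewrite mxE /Jcol /lag /vecf /Lf; have [hc|hc] := ltnP c D.-1 => /=.
  by rewrite hc -eqr_opp opprB.
by rewrite ltnNge leqW.
Qed.

Lemma Jbar_row_delta (c : 'I_(2 * D - 2)) : exists r, row r (Jbar m) = 'e_c.
Proof.
have [p [q Epq]] := lag_diff c.
have pq : (p : nat) != q.
  by apply: contraNneq (lag_neq0 c) => /val_inj epq; rewrite -Epq epq subrr.
have [r Er] := offd_index (pair_in_offd (ltn_ord p) (ltn_ord q) pq).
exists r; apply/rowP => c'; rewrite [LHS]mxE Jbar_lagE Er mxE.
have [-> ->] := divn_modn_pair q (ltn_ord p).
by rewrite !mnE Epq eq_lag eq_sym.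
Qed.

Lemma Jbar_rank : \rank (Jbar m) = (2 * D - 2)%N.
Proof.
apply/eqP; apply: row_full_deltas => c.
by have [r <-] := Jbar_row_delta c; exact: row_sub.
Qed.

End Lags.

Theorem lemma2 (M : nat) (m : 'I_M -> int) (hm : injective m) :
  Psi (Dnum m) \in unitmx /\ Fmx M \in unitmx /\
  \rank (Jbar m) = (2 * Dnum m - 2)%N.
Proof.
by split; [exact: Psi_unit | split; [exact: Fmx_unit | exact: Jbar_rank]].
Qed.
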